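(* Let $G$ be a finite group and let $\chi$ be the character of an irreducible complex representation of $G$ of dimension $n$. Then for every $g\in G$, $$c(g)\le\frac12\Big(1+\frac{1}{n^3}\mathrm{Re}(\chi(g))\Big),$$ and in particular $$c(G)\le\frac12\Big(1+\frac1{n^2}\Big).$$
   Context: For $g\in G$, $c(g)=|\{(x,y)\in G\times G:[x,y]=g\}|/|G|^2$, and $c(G)=c(1)$ (the commuting probability). *)

From mathcomp Require Import all_boot all_order all_algebra all_fingroup all_solvable all_field all_character.
Set Implicit Arguments. Unset Strict Implicit. Unset Printing Implicit Defensive.
Import Order.TTheory GRing.Theory Num.Theory.
Local Open Scope ring_scope.

Definition comm_prob_at (gT : finGroupType) (G : {group gT}) (g : gT) : algC :=
  (#|[set xy : gT * gT | [&& xy.1 \in G, xy.2 \in G & ([~ xy.1, xy.2])%g == g]]|%:R)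
  / (#|G|%:R ^+ 2).

Definition comm_prob (gT : finGroupType) (G : {group gT}) : algC :=
  comm_prob_at G 1%g.

From mathcomp Require Import all_boot all_order all_algebra all_fingroup all_solvable all_field all_character.
From mathcomp Require Import ring.
Import Order.TTheory GRing.Theory Num.Theory.
Local Open Scope ring_scope.

(* For fixed x, the y in G with [x, y] = g are those with x ^ y = x g: either
   none, or a right coset of C_G[x].  With n = chi(1) this gives
     2 n^2 |{y | [x, y] = g}| <= |G| (n^2 + Re (chi(x g) chi(x^-1))),
   trivially when there is no such y (as |chi| <= n), and otherwise because
   chi(x g) = chi(x), so that the right-hand side is |G| (n^2 + |chi(x)|^2):
   either |C_G[x]| <= |G|/2, or x is central and |chi(x)| = n.  Summing over
   x in G and using the generalized orthogonality relation
   sum_x chi(x g) chi(x^-1) = |G| chi(g) / n yields the bound on c(g). *)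

Lemma Re_ge_Nnorm (z : algC) : - `|z| <= 'Re z.
Proof. by rewrite lerNl -normrN -raddfN; apply: leif_Re_Creal. Qed.

Section CommutatorFibers.

Local Open Scope group_scope.

Context {gT : finGroupType}.
Implicit Types (G : {group gT}) (g x y : gT).

Definition commg_fiber G x g := [set y in G | [~ x, y] == g].

Lemma card_commg_pairs G g :
  #|[set xy : gT * gT | [&& xy.1 \in G, xy.2 \in G & [~ xy.1, xy.2] == g]]|
  = (\sum_(x in G) #|commg_fiber G x g|)%N.
Proof.
under [RHS]eq_bigr do rewrite -sum1_card.
rewrite -sum1_card pair_big_dep /=; apply: eq_bigl => -[x y].
by rewrite !inE.
Qed.

Lemma commg_fiberP {G x g y} : y \in commg_fiber G x g -> x ^ y = x * g.
Proof. by case/setIdP=> _ /eqP <-; rewrite conjg_mulR. Qed.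

Lemma commg_fiber_rcoset {G x g y} :
  y \in commg_fiber G x g -> commg_fiber G x g = 'C_G[x] :* y.
Proof.
move=> Fy; have Gy : y \in G by case/setIdP: Fy.
have fixE z : ([~ x, z] == g) = (x ^ (z * y^-1) == x).
  rewrite conjgM -[RHS](inj_eq (conjg_inj y)) conjgKV.
  by rewrite (commg_fiberP Fy) conjg_mulR (inj_eq (mulgI x)).
apply/setP=> z; rewrite mem_rcoset inE fixE.
apply/andP/subcent1P.
  by case=> Gz /eqP/conjg_fixP/commgP; split; rewrite ?groupM ?groupV.
by case=> Gzy /commgP/conjg_fixP/eqP; split; rewrite // -(mulgKV y z) groupM.
Qed.

Lemma center_of_cent1_card_gt_half G x :
  x \in G -> (#|G| < 2 * #|'C_G[x]|)%N -> x \in 'Z(G).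
Proof.
move=> Gx ltGC; apply/centerP; split=> // y Gy.
suff CG : G \subset 'C_G[x] by case/subcent1P: (subsetP CG y Gy).
apply: contraLR ltGC; rewrite -indexg_gt1 -leqNgt => gt1_index.
by rewrite -(Lagrange (subsetIl G 'C[x])) mulnC leq_mul2l gt1_index orbT.
Qed.

End CommutatorFibers.

Section IrreducibleCharacter.

Variables (gT : finGroupType) (G : {group gT}) (i : Iirr G).

Lemma norm_irr_center x : x \in 'Z(G)%g -> `|'chi_i x| = 'chi_i 1%g.
Proof.
move=> Zx; have Gx : x \in G by case/centerP: Zx.
have : x \in 'Z('chi_i)%CF by rewrite -cap_cfcenter_irr in Zx; exact: (bigcapP Zx).
by rewrite irr_cfcenterE // => /eqP.
Qed.

Lemma sum_irr_shift_inv g :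
  \sum_(x in G) 'chi_i (x * g)%g * 'chi_i x^-1%g = #|G|%:R * ('chi_i g / 'chi_i 1%g).
Proof.
have := generalized_orthogonality_relation g i i; rewrite eqxx mul1r => <-.
by rewrite mulrA mulfV ?mul1r // pnatr_eq0 -lt0n cardG_gt0.
Qed.

Lemma commg_fiber_irr_bound x g : x \in G ->
  #|commg_fiber G x g|%:R * 2 * 'chi_i 1%g ^+ 2
    <= #|G|%:R * ('chi_i 1%g ^+ 2 + 'Re ('chi_i (x * g)%g * 'chi_i x^-1%g)).
Proof.
move=> Gx.
have chi1_ge0 : 0 <= 'chi_i 1%g by exact/ltW/irr1_gt0.
have [y Fy | F0] := pickP (mem (commg_fiber G x g)); last first.
  rewrite (eq_card0 F0) !mul0r mulr_ge0 // -lerBlDl sub0r.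
  apply: le_trans (Re_ge_Nnorm _); rewrite lerN2 normrM expr2.
  by apply: ler_pM; rewrite ?normr_ge0 // char1_ge_norm ?irr_char.
have Gy : y \in G by case/setIdP: Fy.
rewrite -(commg_fiberP Fy) cfunJ // irr_inv -normCK.
rewrite (Creal_ReP _ _) ?realX ?normr_real //.
rewrite (commg_fiber_rcoset Fy) card_rcoset.
have [leGC | ltGC] := leqP (2 * #|'C_G[x]%g|) #|G|.
  apply: (@le_trans _ _ (#|G|%:R * 'chi_i 1%g ^+ 2)).
    by rewrite -natrM mulnC ler_wpM2r ?exprn_ge0 // ler_nat.
  by rewrite ler_wpM2l ?ler0n // lerDl exprn_ge0.
rewrite norm_irr_center ?center_of_cent1_card_gt_half //.
apply: (@le_trans _ _ (#|G|%:R * 2 * 'chi_i 1%g ^+ 2)); last first.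
  by rewrite -mulrA -[2]/(1 + 1) mulrDl mul1r.
by rewrite !ler_wpM2r ?exprn_ge0 // ler_nat subset_leq_card ?subsetIl.
Qed.

Lemma comm_prob_at_le_irr g :
  comm_prob_at G g <= 2^-1 * (1 + 'Re ('chi_i g) / 'chi_i 1%g ^+ 3).
Proof.
have chi1_gt0 := irr1_gt0 i; have G_gt0 : (0 : algC) < #|G|%:R by rewrite ltr0n.
rewrite /comm_prob_at card_commg_pairs natr_sum.
set N := \sum_(x in G) _.
have N_le : N * 2 * 'chi_i 1%g ^+ 2
    <= #|G|%:R * (#|G|%:R * 'chi_i 1%g ^+ 2 + #|G|%:R * ('Re ('chi_i g) / 'chi_i 1%g)).
  rewrite !mulr_suml; apply: le_trans (ler_sum _ (fun x => commg_fiber_irr_bound x g)) _.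
  rewrite -mulr_sumr big_split sumr_const -[_ ^+ 2 *+ _]mulr_natl /= -raddf_sum /=.
  by rewrite sum_irr_shift_inv ReMl ?realn // ReMr ?realV ?gtr0_real.
rewrite ler_pdivrMr ?exprn_gt0 //.
rewrite -(ler_pM2r (_ : 0 < 2 * 'chi_i 1%g ^+ 2)) ?mulr_gt0 ?exprn_gt0 //.
rewrite mulrA; apply: le_trans N_le _; rewrite le_eqVlt; apply: predU1l.
by field; rewrite gt_eqF.
Qed.

Lemma comm_prob_le_irr : comm_prob G <= 2^-1 * (1 + 1 / 'chi_i 1%g ^+ 2).
Proof.
have chi1_neq0 : 'chi_i 1%g != 0 by rewrite gt_eqF ?irr1_gt0.
have := comm_prob_at_le_irr 1%g; rewrite (Creal_ReP _ (gtr0_real (irr1_gt0 i))).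
by rewrite [X in 1 + X](_ : _ = 1 / 'chi_i 1%g ^+ 2) //; field.
Qed.

End IrreducibleCharacter.

Theorem corollary3 (gT : finGroupType) (G : {group gT}) (i : Iirr G) (n : nat) :
  'chi_i 1%g = n%:R ->
  (forall g, g \in G ->
     comm_prob_at G g <= 2^-1 * (1 + 'Re ('chi_i g) / (n%:R ^+ 3))) /\
  comm_prob G <= 2^-1 * (1 + 1 / (n%:R ^+ 2)).
Proof.
move=> <-; split; last exact: comm_prob_le_irr.
by move=> g _; apply: comm_prob_at_le_irr.
Qed.
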